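(* Let $\mathfrak g$ be a Lie algebra over $\mathbb F$ ($\mathbb F=\mathbb R$ or $\mathbb C$) with center $\mathfrak z(\mathfrak g)$, let $c\in\mathbb F$, let $R$ be a linear endomorphism of $\mathfrak g$, and let $\mathcal R$ be the endomorphism of $\mathfrak g\times\mathfrak g$ defined by $\mathcal R(x,y)=\big(R(x-y)+cy,\;R(x-y)+cx\big)$. Then $\mathcal R$ is an $R$-matrix of the Lie algebra $\mathfrak g\times\mathfrak g$ (with componentwise bracket) if and only if $$B_R(x,y)+c^2[x,y]\in\mathfrak z(\mathfrak g)\qquad\text{for all }x,y\in\mathfrak g.$$ In particular, if $\mathfrak g$ is a complex semisimple Lie algebra, $\mathcal R$ is an $R$-matrix of $\mathfrak g\times\mathfrak g$ if and only if $R$ satisfies the modified classical Yang–Baxter equation of constant $c$.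
   Context: For a Lie algebra $\mathfrak a$ and a linear endomorphism $S$ of $\mathfrak a$, put $[x,y]_S=\tfrac12([Sx,y]+[x,Sy])$ and $B_S(x,y)=[Sx,Sy]-S([Sx,y]+[x,Sy])$. $S$ is called an $R$-matrix of $\mathfrak a$ if $[\cdot,\cdot]_S$ is a Lie bracket on $\mathfrak a$. $S$ satisfies the modified classical Yang–Baxter equation (mCYBE) of constant $c$ if $B_S(x,y)=-c^2[x,y]$ for all $x,y\in\mathfrak a$. The Lie algebra $\mathfrak g\times\mathfrak g$ carries the bracket $[(x,y),(z,s)]=([x,z],[y,s])$. *)

From HB Require Import structures.
From mathcomp Require Import all_boot all_order all_algebra.
Set Implicit Arguments. Unset Strict Implicit. Unset Printing Implicit Defensive.
Import Order.TTheory GRing.Theory Num.Theory.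
Local Open Scope ring_scope.

Section LieDefs.
Variables (F : numFieldType) (V : lmodType F).

Definition is_lie_bracket (br : V -> V -> V) : Prop :=
  [/\ (forall a x y z, br (a *: x + y) z = a *: br x z + br y z),
      (forall a x y z, br x (a *: y + z) = a *: br x y + br x z),
      (forall x, br x x = 0) &
      (forall x y z, br x (br y z) + br y (br z x) + br z (br x y) = 0)].

Definition bracketS (br : V -> V -> V) (S : V -> V) : V -> V -> V :=
  fun x y => 2%:R^-1 *: (br (S x) y + br x (S y)).

Definition is_Rmatrix (br : V -> V -> V) (S : V -> V) : Prop :=
  is_lie_bracket (bracketS br S).

Definition BS (br : V -> V -> V) (S : V -> V) (x y : V) : V :=
  br (S x) (S y) - S (br (S x) y + br x (S y)).

Definition mCYBE (br : V -> V -> V) (S : V -> V) (c : F) : Prop :=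
  forall x y, BS br S x y = - (c ^+ 2) *: br x y.

Definition in_center (br : V -> V -> V) (z : V) : Prop :=
  forall x, br z x = 0.

Definition is_subspace (W : V -> Prop) : Prop :=
  W 0 /\ forall a u v, W u -> W v -> W (a *: u + v).

Definition is_ideal (br : V -> V -> V) (I : V -> Prop) : Prop :=
  is_subspace I /\ forall x y, I x -> I (br x y).

Definition derived (br : V -> V -> V) (I : V -> Prop) : V -> Prop :=
  fun v => forall W, is_subspace W ->
    (forall x y, I x -> I y -> W (br x y)) -> W v.

Definition derived_series (br : V -> V -> V) (I : V -> Prop) (n : nat) : V -> Prop :=
  iter n (derived br) I.

Definition solvable_ideal (br : V -> V -> V) (I : V -> Prop) : Prop :=
  is_ideal br I /\ exists n, forall v, derived_series br I n v -> v = 0.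

Definition semisimple (br : V -> V -> V) : Prop :=
  forall I, solvable_ideal br I -> forall v, I v -> v = 0.

End LieDefs.

Definition prod_bracket (F : numFieldType) (V : lmodType F) (br : V -> V -> V)
  (u v : V * V) : V * V := (br u.1 v.1, br u.2 v.2).

Definition calR (F : numFieldType) (V : lmodType F) (R : V -> V) (c : F)
  (u : V * V) : V * V :=
  (R (u.1 - u.2) + c *: u.2, R (u.1 - u.2) + c *: u.1).

From mathcomp Require Import all_boot all_algebra ssrAC.
Import GRing.Theory Num.Theory.
Set Implicit Arguments. Unset Strict Implicit.
Local Open Scope ring_scope.

(* For a linear S, the Jacobiator of [.,.]_S is a quarter of the cyclic sum of
   [B_S(x,y), z], so S is an R-matrix iff that cyclic sum vanishes.  For the map
   calR on g x g one computes, with a = x1 - x2, b = y1 - y2 and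
   K(a,b) = B_R(a,b) + c^2 [a,b],
     B_calR((x1,x2),(y1,y2)) = (K(a,b) - c^2 [x1,y1], K(a,b) - c^2 [x2,y2]);
   the c^2-terms drop out of the cyclic sum by the Jacobi identity, and the
   arguments (x,0), (y,0), (z,z) isolate [K(x,y), z].  In the semisimple case the
   center, an abelian ideal, is trivial. *)

Section LieBracket.
Variables (F : numFieldType) (V : lmodType F) (br : V -> V -> V).
Hypothesis br_lie : is_lie_bracket br.

Lemma lieDl x y z : br (x + y) z = br x z + br y z.
Proof. by case: br_lie => brl _ _ _; have := brl 1 x y z; rewrite !scale1r. Qed.

Lemma lieDr x y z : br z (x + y) = br z x + br z y.
Proof. by case: br_lie => _ brr _ _; have := brr 1 z x y; rewrite !scale1r. Qed.

Lemma lie0l z : br 0 z = 0.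
Proof. by apply: (@addrI _ (br 0 z)); rewrite -lieDl !addr0. Qed.

Lemma lie0r z : br z 0 = 0.
Proof. by apply: (@addrI _ (br z 0)); rewrite -lieDr !addr0. Qed.

Lemma lieZl a x z : br (a *: x) z = a *: br x z.
Proof.
by case: br_lie => brl _ _ _; have := brl a x 0 z; rewrite !addr0 lie0l addr0.
Qed.

Lemma lieZr a x z : br z (a *: x) = a *: br z x.
Proof.
by case: br_lie => _ brr _ _; have := brr a z x 0; rewrite !addr0 lie0r addr0.
Qed.

Lemma lieNl x z : br (- x) z = - br x z.
Proof. by rewrite -scaleN1r lieZl scaleN1r. Qed.

Lemma lieNr x z : br z (- x) = - br z x.
Proof. by rewrite -scaleN1r lieZr scaleN1r. Qed.

Lemma lieBl x y z : br (x - y) z = br x z - br y z.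
Proof. by rewrite lieDl lieNl. Qed.

Lemma lieBr x y z : br z (x - y) = br z x - br z y.
Proof. by rewrite lieDr lieNr. Qed.

Lemma lie_anticomm x y : br x y = - br y x.
Proof.
case: br_lie => _ _ alt _; apply/eqP; rewrite -addr_eq0; apply/eqP.
by have := alt (x + y); rewrite lieDl !lieDr !alt add0r addr0.
Qed.

Lemma lie_jacobi_l x y z : br (br x y) z + br (br y z) x + br (br z x) y = 0.
Proof.
case: br_lie => _ _ _ jacobi.
rewrite [br (br x y) z]lie_anticomm [br (br y z) x]lie_anticomm.
rewrite [br (br z x) y]lie_anticomm -!opprD -[RHS]oppr0; congr (- _).
by rewrite [LHS](@GRing.add V).[ACl (2*3*1)] jacobi.
Qed.

Lemma lieBB_subr x1 x2 y1 y2 :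
  br (x1 - x2) (y1 - y2) - br x1 y1 = br x2 y2 - br x1 y2 - br x2 y1.
Proof.
rewrite lieBl !lieBr !opprB !addrA.
by rewrite [LHS](@GRing.add V).[ACl (3*2*4*1*5)] addrK.
Qed.

Lemma lie_shift_diff c A B x1 x2 y1 y2 :
  br (A + c *: x2) y1 + br x1 (B + c *: y2) - (br (A + c *: x1) y2 + br x2 (B + c *: y1))
  = br A (y1 - y2) + br (x1 - x2) B.
Proof.
rewrite !(lieDl, lieDr, lieNl, lieNr, lieZl, lieZr).
rewrite !opprD !addrA [LHS](@GRing.add V).[ACl (1*5*3*7*4*6*2*8)].
by rewrite !addrK.
Qed.

Lemma lie_cycle_subZ d k1 k2 k3 x y z :
  br (k1 - d *: br x y) z + br (k2 - d *: br y z) x + br (k3 - d *: br z x) y =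
  br k1 z + br k2 x + br k3 y.
Proof.
rewrite !lieBl !lieZl !addrA [LHS](@GRing.add V).[ACl (1*3*5*2*4*6)].
rewrite -!addrA -!opprD -!scalerDr.
by rewrite [in X in d *: X]addrA lie_jacobi_l scaler0 subr0.
Qed.

Lemma semisimple_center0 z : semisimple br -> in_center br z -> z = 0.
Proof.
move=> br_ss z_central; apply: (br_ss (in_center br)) => //; split.
- split; first split.
  + by move=> x; rewrite lie0l.
  + move=> a u v u_central v_central x.
    by rewrite lieDl lieZl u_central v_central scaler0 addr0.
  + by move=> x y x_central t; rewrite x_central lie0l.
- exists 1%N => v /= v_derived; apply: (v_derived (fun v => v = 0)).
  + by split => // a p q -> ->; rewrite scaler0 addr0.
  + by move=> x y x_central _; rewrite x_central.
Qed.

End LieBracket.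

Definition lie_cycle (F : numFieldType) (V : lmodType F) (br f : V -> V -> V)
    (x y z : V) : V :=
  br (f x y) z + br (f y z) x + br (f z x) y.

Section RMatrix.
Variables (F : numFieldType) (V : lmodType F) (br : V -> V -> V) (S : V -> V).
Hypotheses (br_lie : is_lie_bracket br) (S_linear : linear S).

Let S0 : S 0 = 0.
Proof.
have := S_linear 1 0 0; rewrite !scale1r addr0 => S0_double.
by apply: (@addrI _ (S 0)); rewrite addr0 -S0_double.
Qed.

Let SD x y : S (x + y) = S x + S y.
Proof. by rewrite -[x]scale1r S_linear !scale1r. Qed.

Let SZ a x : S (a *: x) = a *: S x.
Proof. by rewrite -[a *: x]addr0 S_linear S0 addr0. Qed.

Let twice_bracketS x y := br (S x) y + br x (S y).

Lemma twice_bracketS_jacobiator x y z :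
  twice_bracketS x (twice_bracketS y z) + twice_bracketS y (twice_bracketS z x)
    + twice_bracketS z (twice_bracketS x y)
  = lie_cycle br (BS br S) x y z.
Proof.
have twice_bracketS_r a b d : twice_bracketS a (twice_bracketS b d) =
    br (S a) (br (S b) d) + br (S a) (br b (S d)) + br a (S (twice_bracketS b d)).
  by rewrite {1}/twice_bracketS (lieDr br_lie).
have BS_l a b d :
    br (BS br S a b) d = br (br (S a) (S b)) d + br d (S (twice_bracketS a b)).
  by rewrite /BS (lieBl br_lie) -(lie_anticomm br_lie).
have jacobi a b d :
    br (br (S a) (S b)) d = br (S a) (br (S b) d) + br (S b) (br d (S a)).
  apply/eqP; rewrite (lie_anticomm br_lie) eq_sym -addr_eq0.
  by case: br_lie => _ _ _ ->.
rewrite /lie_cycle !twice_bracketS_r !BS_l !jacobi !addrA.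
by rewrite [LHS](@GRing.add V).[ACl (1*5*9*4*8*3*7*2*6)].
Qed.

Lemma RmatrixP :
  is_Rmatrix br S <-> forall x y z, lie_cycle br (BS br S) x y z = 0.
Proof.
have bracketSE x y : bracketS br S x y = 2%:R^-1 *: twice_bracketS x y by [].
have quarter_neq0 : (2%:R^-1 * 2%:R^-1 : F) != 0.
  by rewrite mulf_neq0 // invr_eq0 pnatr_eq0.
have jacobiatorE x y z :
    bracketS br S x (bracketS br S y z) + bracketS br S y (bracketS br S z x)
    + bracketS br S z (bracketS br S x y)
    = (2%:R^-1 * 2%:R^-1) *: lie_cycle br (BS br S) x y z.
  rewrite -twice_bracketS_jacobiator !bracketSE {1 3 5}/twice_bracketS.
  rewrite !(lieZr br_lie) !SZ !(lieZr br_lie).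
  by rewrite -!scalerDr !scalerA !scalerDr.
split.
  case=> _ _ _ jacobi x y z; have /eqP := jacobi x y z.
  by rewrite jacobiatorE scaler_eq0 (negbTE quarter_neq0) => /eqP.
move=> cycle0; split.
- move=> a x y z; rewrite !bracketSE /twice_bracketS SD SZ.
  rewrite !(lieDl br_lie, lieZl br_lie, lieZr br_lie).
  rewrite scalerA mulrC -scalerA -scalerDr; congr (_ *: _).
  by rewrite scalerDr !addrA [LHS](@GRing.add V).[ACl (1*3*2*4)].
- move=> a x y z; rewrite !bracketSE /twice_bracketS SD SZ.
  rewrite !(lieDr br_lie, lieZl br_lie, lieZr br_lie).
  rewrite scalerA mulrC -scalerA -scalerDr; congr (_ *: _).
  by rewrite scalerDr !addrA [LHS](@GRing.add V).[ACl (1*3*2*4)].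
- move=> x; rewrite bracketSE /twice_bracketS.
  by rewrite [br (S x) x](lie_anticomm br_lie) addNr scaler0.
- by move=> x y z; rewrite jacobiatorE cycle0 scaler0.
Qed.

End RMatrix.

Lemma prod_bracket_lie (F : numFieldType) (V : lmodType F) (br : V -> V -> V) :
  is_lie_bracket br -> is_lie_bracket (prod_bracket br).
Proof.
case=> brl brr alt jacobi; split.
- by move=> a [x1 x2] [y1 y2] [z1 z2]; congr (_, _); rewrite /= ?brl.
- by move=> a [x1 x2] [y1 y2] [z1 z2]; congr (_, _); rewrite /= ?brr.
- by move=> [x1 x2]; congr (_, _); rewrite /= alt.
- by move=> [x1 x2] [y1 y2] [z1 z2]; congr (_, _); rewrite /= jacobi.
Qed.

Section CalR.
Variables (F : numFieldType) (V : lmodType F) (br : V -> V -> V).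
Variables (c : F) (R : {linear V -> V}).
Hypothesis br_lie : is_lie_bracket br.

Lemma calR_linear : linear (calR R c).
Proof.
move=> a [x1 x2] [y1 y2]; rewrite /calR /=.
have -> : a *: x1 + y1 - (a *: x2 + y2) = a *: (x1 - x2) + (y1 - y2).
  by rewrite scalerBr opprD !addrA [LHS](@GRing.add V).[ACl (1*3*2*4)].
by congr (_, _); rewrite /= linearP !scalerDr scalerA mulrC -scalerA !addrA
  [LHS](@GRing.add V).[ACl (1*3*2*4)].
Qed.

Let cybe_defect a b := BS br R a b + c ^+ 2 *: br a b.
Let diff_defect (u v : V * V) := cybe_defect (u.1 - u.2) (v.1 - v.2).

Lemma BS_calR_component a b p q p' q' :
  br (R a + c *: p) (R b + c *: q) -
    (R (br (R a) b + br a (R b)) + c *: (br (R a + c *: p') q + br p (R b + c *: q')))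
  = BS br R a b + c ^+ 2 *: (br p q - br p' q - br p q').
Proof.
rewrite /BS !(lieDl br_lie, lieDr br_lie, lieZl br_lie, lieZr br_lie).
rewrite !scalerDr !scalerN !scalerA -expr2 !opprD !addrA.
by rewrite [LHS](@GRing.add V).[ACl (1*5*4*7*9*2*6*3*8)] !addrK.
Qed.

Lemma BS_calR u v : BS (prod_bracket br) (calR R c) u v =
  (diff_defect u v - c ^+ 2 *: br u.1 v.1, diff_defect u v - c ^+ 2 *: br u.2 v.2).
Proof.
case: u v => [x1 x2] [y1 y2].
rewrite /BS /calR /prod_bracket /= (lie_shift_diff br_lie).
congr (_, _); rewrite /= BS_calR_component /diff_defect /cybe_defect.
  by rewrite -[RHS]addrA -scalerBr (lieBB_subr br_lie).
rewrite -[RHS]addrA -scalerBr -(opprB x2) -(opprB y2).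
by rewrite (lieNl br_lie) (lieNr br_lie) opprK (lieBB_subr br_lie).
Qed.

Lemma lie_cycle_BS_calR u v w :
  lie_cycle (prod_bracket br) (BS (prod_bracket br) (calR R c)) u v w =
  (br (diff_defect u v) w.1 + br (diff_defect v w) u.1 + br (diff_defect w u) v.1,
   br (diff_defect u v) w.2 + br (diff_defect v w) u.2 + br (diff_defect w u) v.2).
Proof.
by rewrite /lie_cycle !BS_calR; congr (_, _); rewrite /= (lie_cycle_subZ br_lie).
Qed.

Lemma calR_RmatrixP :
  is_Rmatrix (prod_bracket br) (calR R c) <->
  forall x y, in_center br (cybe_defect x y).
Proof.
apply: iff_trans (RmatrixP (prod_bracket_lie br_lie) calR_linear) _.
split=> [cycle0 x y z | defect_central u v w]; last first.
  by rewrite lie_cycle_BS_calR !defect_central !addr0.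
have defect0r a : cybe_defect a 0 = 0.
  by rewrite /cybe_defect /BS !(raddf0 R, lie0r br_lie, addr0, scaler0, subrr).
have defect0l a : cybe_defect 0 a = 0.
  by rewrite /cybe_defect /BS !(raddf0 R, lie0l br_lie, add0r, scaler0, subrr, oppr0).
have := congr1 fst (cycle0 (x, 0) (y, 0) (z, z)).
rewrite lie_cycle_BS_calR /diff_defect /=.
by rewrite !subr0 subrr defect0r defect0l !(lie0l br_lie) !addr0.
Qed.

End CalR.

Theorem proposition2p1 (F : numFieldType) (V : lmodType F)
  (br : V -> V -> V) (c : F) (R : {linear V -> V}) :
  is_lie_bracket br ->
  (is_Rmatrix (prod_bracket br) (calR R c) <->
     (forall x y : V, in_center br (BS br R x y + (c ^+ 2) *: br x y)))
  /\
  (semisimple br ->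
     (is_Rmatrix (prod_bracket br) (calR R c) <-> mCYBE br R c)).
Proof.
move=> br_lie; split; first exact: calR_RmatrixP.
move=> br_ss; apply: iff_trans (calR_RmatrixP c R br_lie) _.
split=> [defect_central x y | mCYBE_R x y].
- apply/eqP; rewrite scaleNr -addr_eq0; apply/eqP.
  exact: semisimple_center0 (defect_central x y).
- by rewrite mCYBE_R scaleNr addNr; apply: lie0l.
Qed.
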